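(* Let $A=A_s+A_d\epsilon\in\mathbb{DC}^{m\times n}$ with SVD $A=U\Sigma V^*$, $U\in\mathbb{DC}^{m\times m}$, $V\in\mathbb{DC}^{n\times n}$ unitary dual complex matrices, and $$\Sigma=\begin{bmatrix}\Sigma_{1s}&&\\&O&\\&&O\end{bmatrix}+\begin{bmatrix}\Sigma_{1d}&&\\&\Sigma_{2d}&\\&&O\end{bmatrix}\epsilon,$$ where $\Sigma_1=\Sigma_{1s}+\Sigma_{1d}\epsilon=\mathrm{diag}(\mu_1,\dots,\mu_r)$ with $\mu_1\ge\dots\ge\mu_r$ positive appreciable dual real numbers and $\Sigma_{2d}\epsilon=\mathrm{diag}(\mu_{r+1},\dots,\mu_t)$ with $\mu_{r+1}\ge\dots\ge\mu_t$ positive infinitesimal dual real numbers, $r\le t\le\min\{m,n\}$. Let $A^G=V\begin{bmatrix}\Sigma_1^{-1}&O\\O&O\end{bmatrix}U^*$. Then $$A^G\in\arg\min_{X\in\mathbb{DC}^{n\times m}}\|AXA-A\|_F,$$ where the minimum is taken with respect to the total order on dual real numbers; moreover $A^G$ is the minimizer of minimal Frobenius norm among all minimizers, and the optimal value is $\|AA^GA-A\|_F=\|\Sigma_{2d}\|_F\,\epsilon$. In particular, if all nonzero singular values of $A$ are appreciable ($r=t$), then $AA^GA=A$.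
   Context: A dual number is $a=a_s+a_d\epsilon$ where $\epsilon\neq0$, $\epsilon^2=0$, and $\epsilon$ commutes with real/complex numbers; it is appreciable if $a_s\neq0$ and infinitesimal otherwise. Dual reals are totally ordered by: $a>b$ iff $a_s>b_s$, or $a_s=b_s$ and $a_d>b_d$. For appreciable $\mu$, $\mu^{-1}=\mu_s^{-1}-\mu_s^{-2}\mu_d\epsilon$. For a dual complex matrix $A=A_s+A_d\epsilon$, $A^*=A_s^*+A_d^*\epsilon$; unitary means $U^*U=UU^*=I$. The Frobenius norm of a dual complex matrix is the nonnegative dual real number $\|A\|_F=\|A_s\|_F+\frac{\mathrm{tr}(A_s^*A_d+A_d^*A_s)}{2\|A_s\|_F}\epsilon$ if $A_s\neq O$, and $\|A\|_F=\|A_d\|_F\epsilon$ if $A_s=O$. Every $A\in\mathbb{DC}^{m\times n}$ has an SVD of the stated form with unique singular values $\mu_1,\dots,\mu_t$ (with multiplicities). *)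

From HB Require Import structures.
From mathcomp Require Import all_boot all_order all_algebra.
From mathcomp Require Import reals.
From mathcomp Require Export complex.
Set Implicit Arguments. Unset Strict Implicit. Unset Printing Implicit Defensive.
Import Order.TTheory GRing.Theory Num.Theory.
Local Open Scope ring_scope.

Section Dual.
Variable R : realType.
Local Notation C := R[i].

(* dual real number a_s + a_d eps, as the pair (a_s, a_d) *)
Definition dreal := (R * R)%type.

Definition dle (a b : dreal) : bool :=
  (a.1 < b.1) || ((a.1 == b.1) && (a.2 <= b.2)).

(* inverse of an appreciable dual number *)
Definition dinv (a : dreal) : dreal := (a.1^-1, - (a.1 ^- 2) * a.2).

(* dual complex matrix A_s + A_d eps, as the pair (A_s, A_d) *)
Definition dmx (m n : nat) := ('M[C]_(m, n) * 'M[C]_(m, n))%type.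

Definition dmx_of (m n : nat) (As Ad : 'M[C]_(m, n)) : dmx m n := (As, Ad).

Definition dmul m n p (A : dmx m n) (B : dmx n p) : dmx m p :=
  (A.1 *m B.1, A.1 *m B.2 + A.2 *m B.1).
Definition dsub m n (A B : dmx m n) : dmx m n := (A.1 - B.1, A.2 - B.2).
Definition did n : dmx n n := (1%:M, 0).

Definition cadj m n (A : 'M[C]_(m, n)) : 'M[C]_(n, m) := (map_mx (@conjc R) A)^T.
Definition dadj m n (A : dmx m n) : dmx n m := (cadj A.1, cadj A.2).

Definition dunitary n (U : dmx n n) : Prop :=
  dmul (dadj U) U = did n /\ dmul U (dadj U) = did n.

Definition cfrob m n (A : 'M[C]_(m, n)) : R := Num.sqrt (complex.Re (\tr (cadj A *m A))).

Definition dfrob m n (A : dmx m n) : dreal :=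
  if A.1 == 0 then (0, cfrob A.2)
  else (cfrob A.1, complex.Re (\tr (cadj A.1 *m A.2 + cadj A.2 *m A.1)) / (2 * cfrob A.1)).

Definition ddiag m n (k : nat) (d : nat -> dreal) : dmx m n :=
  (\matrix_(i < m, j < n) if ((i : nat) == j) && (i < k)%N then (d i).1%:C%C else 0,
   \matrix_(i < m, j < n) if ((i : nat) == j) && (i < k)%N then (d i).2%:C%C else 0).

End Dual.

From HB Require Import structures.
From mathcomp Require Import all_boot all_order all_algebra.
From mathcomp Require Import reals complex.
Import Order.TTheory GRing.Theory Num.Theory.
Local Open Scope ring_scope.
Set Implicit Arguments. Unset Strict Implicit. Unset Printing Implicit Defensive.

(* Write X = V Z U^*. Then A X A - A = U (Sigma Z Sigma - Sigma) V^*, and the dual Frobenius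
   norm is invariant under multiplication by dual unitary matrices, so it suffices to treat
   A = Sigma. Let P be the projection onto the first r coordinates and Q = 1 - P. The block
   Q (Sigma Z Sigma - Sigma)_d Q equals -Sigma_2d whatever Z is, so by Pythagoras every residual
   is at least Sigma_2d eps, and A^G attains this. A minimizer must have zero standard residual,
   which forces P Z_s P = Sigma_1s^-1, and zero P-block of the dual residual, which forces
   P Z_d P = (Sigma_1^-1)_d once Z_s = Sigma_1s^-1; any other component of Z_s strictly
   increases the standard part of the norm of Z. *)

Section ComplexMatrix.
Variable R : realType.
Local Notation C := R[i].

Lemma cadjM m n p (A : 'M[C]_(m, n)) (B : 'M[C]_(n, p)) :
  cadj (A *m B) = cadj B *m cadj A.
Proof. by rewrite /cadj map_mxM trmx_mul. Qed.

Lemma cadjD m n (A B : 'M[C]_(m, n)) : cadj (A + B) = cadj A + cadj B.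
Proof. by rewrite /cadj map_mxD linearD. Qed.

Lemma cadjN m n (A : 'M[C]_(m, n)) : cadj (- A) = - cadj A.
Proof. by rewrite /cadj map_mxN linearN. Qed.

Lemma cadjB m n (A B : 'M[C]_(m, n)) : cadj (A - B) = cadj A - cadj B.
Proof. by rewrite cadjD cadjN. Qed.

Lemma cadjK m n (A : 'M[C]_(m, n)) : cadj (cadj A) = A.
Proof. by apply/matrixP => i j; rewrite /cadj !mxE conjcK. Qed.

Lemma cadj1 n : cadj (1%:M : 'M[C]_n) = 1%:M.
Proof.
apply/matrixP => i j; rewrite /cadj !mxE eq_sym.
by case: eqP; rewrite ?conjc1 ?conjc0.
Qed.

Lemma mxtrace_cadj n (A : 'M[C]_n) : \tr (cadj A) = (\tr A)^*%C.
Proof. by rewrite /mxtrace rmorph_sum; apply: eq_bigr => i _; rewrite /cadj !mxE. Qed.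

Lemma mxtrace_cadj_mulC m n (X Y : 'M[C]_(m, n)) :
  \tr (cadj Y *m X) = (\tr (cadj X *m Y))^*%C.
Proof. by rewrite -mxtrace_cadj cadjM cadjK. Qed.

Definition frob2 m n (A : 'M[C]_(m, n)) : R := complex.Re (\tr (cadj A *m A)).

Lemma cfrobE m n (A : 'M[C]_(m, n)) : cfrob A = Num.sqrt (frob2 A).
Proof. by []. Qed.

Lemma mxtrace_cadj_mul_sum m n (A : 'M[C]_(m, n)) :
  \tr (cadj A *m A) = \sum_i \sum_j A j i * (A j i)^*%C.
Proof.
rewrite /mxtrace; apply: eq_bigr => i _; rewrite mxE; apply: eq_bigr => j _.
by rewrite /cadj !mxE mulrC.
Qed.

Lemma mxtrace_cadj_mul_ge0 m n (A : 'M[C]_(m, n)) : 0 <= \tr (cadj A *m A).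
Proof.
rewrite mxtrace_cadj_mul_sum.
by apply: sumr_ge0 => i _; apply: sumr_ge0 => j _; apply: mulcJ_ge0.
Qed.

Lemma mxtrace_cadj_mul m n (A : 'M[C]_(m, n)) : \tr (cadj A *m A) = (frob2 A)%:C%C.
Proof.
rewrite /frob2; have := ger0_Im (mxtrace_cadj_mul_ge0 A).
by case: (\tr _) => a b /= ->.
Qed.

Lemma frob2_ge0 m n (A : 'M[C]_(m, n)) : 0 <= frob2 A.
Proof. by rewrite -lecR -mxtrace_cadj_mul; apply: mxtrace_cadj_mul_ge0. Qed.

Lemma frob2_eq0 m n (A : 'M[C]_(m, n)) : frob2 A = 0 -> A = 0.
Proof.
move=> A0; have /eqP : \tr (cadj A *m A) = 0 by rewrite mxtrace_cadj_mul A0.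
rewrite mxtrace_cadj_mul_sum psumr_eq0; last first.
  by move=> i _; apply: sumr_ge0 => j _; apply: mulcJ_ge0.
move=> /allP A0col; apply/matrixP => j i; rewrite mxE.
move: (A0col i (mem_index_enum _)); rewrite /= psumr_eq0; last first.
  by move=> k _; apply: mulcJ_ge0.
move=> /allP/(_ j (mem_index_enum _)).
by rewrite /= mulf_eq0 conjc_eq0 orbb => /eqP.
Qed.

Lemma frob2_0 m n : frob2 (0 : 'M[C]_(m, n)) = 0.
Proof. by rewrite /frob2 mulmx0 linear0. Qed.

Lemma frob2N m n (A : 'M[C]_(m, n)) : frob2 (- A) = frob2 A.
Proof. by rewrite /frob2 cadjN mulNmx mulmxN opprK. Qed.

Lemma cfrob0 m n : cfrob (0 : 'M[C]_(m, n)) = 0.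
Proof. by rewrite cfrobE frob2_0 sqrtr0. Qed.

Lemma cfrob_gt0 m n (A : 'M[C]_(m, n)) : A != 0 -> 0 < cfrob A.
Proof.
move=> A_neq0; rewrite cfrobE sqrtr_gt0 lt_def frob2_ge0 andbT.
by apply: contra A_neq0 => /eqP/frob2_eq0 ->.
Qed.

Lemma frob2_unitary_mull m n (U : 'M[C]_m) (X : 'M[C]_(m, n)) :
  cadj U *m U = 1%:M -> frob2 (U *m X) = frob2 X.
Proof. by move=> uU; rewrite /frob2 cadjM mulmxA -(mulmxA _ (cadj U)) uU mulmx1. Qed.

Lemma frob2_unitary_mulr m n (V : 'M[C]_n) (X : 'M[C]_(m, n)) :
  cadj V *m V = 1%:M -> frob2 (X *m cadj V) = frob2 X.
Proof.
move=> uV; rewrite /frob2 cadjM cadjK mxtrace_mulC !mulmxA -(mulmxA _ (cadj V) V).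
by rewrite uV mulmx1 mxtrace_mulC.
Qed.

Lemma frob2_proj_l m n (P : 'M[C]_m) (X : 'M[C]_(m, n)) :
  cadj P = P -> P *m P = P -> frob2 X = frob2 (P *m X) + frob2 ((1%:M - P) *m X).
Proof.
move=> sP iP; rewrite /frob2 -raddfD /= -mxtraceD; congr (complex.Re (\tr _)).
rewrite !cadjM cadjB cadj1 sP !mulmxA -[_ *m P *m P]mulmxA iP.
rewrite -[_ *m (1%:M - P) *m (1%:M - P)]mulmxA.
have -> : (1%:M - P) *m (1%:M - P) = 1%:M - P.
  by rewrite mulmxBl mul1mx mulmxBr mulmx1 iP subrr subr0.
by rewrite -mulmxDl -mulmxDr addrC subrK mulmx1.
Qed.

Lemma frob2_proj_r m n (P : 'M[C]_n) (X : 'M[C]_(m, n)) :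
  cadj P = P -> P *m P = P -> frob2 X = frob2 (X *m P) + frob2 (X *m (1%:M - P)).
Proof.
move=> sP iP; rewrite /frob2 -raddfD /= -mxtraceD; congr complex.Re.
rewrite !cadjM cadjB cadj1 sP.
rewrite mxtraceD !(mxtrace_mulC (_ *m cadj X)) (mxtrace_mulC (cadj X)).
rewrite !mulmxA -[X *m P *m P]mulmxA iP.
rewrite -[X *m (1%:M - P) *m (1%:M - P)]mulmxA.
have -> : (1%:M - P) *m (1%:M - P) = 1%:M - P.
  by rewrite mulmxBl mul1mx mulmxBr mulmx1 iP subrr subr0.
by rewrite -mxtraceD -mulmxDl -mulmxDr addrC subrK mulmx1.
Qed.

Definition rdiag_mx m n k (f : nat -> C) : 'M[C]_(m, n) :=
  \matrix_(i < m, j < n) if ((i : nat) == j) && (i < k)%N then f i else 0.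

Lemma mul_rdiag_mx m n p k l (f g : nat -> C) : (k <= n)%N ->
  rdiag_mx m n k f *m rdiag_mx n p l g = rdiag_mx m p (minn k l) (fun i => f i * g i).
Proof.
move=> le_kn; apply/matrixP => i j; rewrite !mxE.
under eq_bigr do rewrite !mxE.
case: (ltnP i k) => [lt_ik|/leq_gtF ik_false]; last first.
  rewrite big1 => [|l0 _]; first by rewrite leq_min ik_false andbF.
  by rewrite andbF mul0r.
have lt_in : (i < n)%N by apply: leq_trans le_kn.
rewrite (bigD1 (Ordinal lt_in)) //= big1 ?addr0 => [|l0 /eqP ne]; last first.
  by case: eqP; rewrite ?mul0r // => e; case: ne; apply: val_inj.
by rewrite eqxx /= leq_min lt_ik /=; case: ifP; rewrite ?mulr0.
Qed.

Lemma cadj_rdiag_mx m n k f :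
  cadj (rdiag_mx m n k f) = rdiag_mx n m k (fun i => (f i)^*%C).
Proof.
apply/matrixP => i j; rewrite /cadj !mxE.
have [e|ne] := eqVneq (i : nat) j; last exact: conjc0.
by rewrite /= e; case: ifP; rewrite ?conjc0.
Qed.

Lemma mxtrace_rdiag_mx n k f : (k <= n)%N -> \tr (rdiag_mx n n k f) = \sum_(i < k) f i.
Proof.
move=> le_kn; rewrite /mxtrace.
under eq_bigr do rewrite mxE eqxx /=.
by rewrite -big_mkcond /= (big_ord_widen_cond n xpredT f le_kn).
Qed.

Lemma eq_rdiag_mx m n k f g : (forall i, (i < k)%N -> f i = g i) ->
  rdiag_mx m n k f = rdiag_mx m n k g.
Proof.
move=> eq_fg; apply/matrixP => i j; rewrite !mxE.
by case: (ltnP i k) => [/eq_fg ->|]; rewrite ?andbF.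
Qed.

Lemma rdiag_mx_shrink m n k l f : (k <= l)%N ->
  (forall i, (k <= i < l)%N -> f i = 0) -> rdiag_mx m n l f = rdiag_mx m n k f.
Proof.
move=> le_kl f0; apply/matrixP => i j; rewrite !mxE.
case: (ltnP i k) => [lt_ik|le_ki]; first by rewrite (leq_trans lt_ik le_kl).
rewrite andbF; case: ((i : nat) == j) => //=.
by case: ifP => // lt_il; rewrite f0 // le_ki.
Qed.

Lemma rdiag_mxN m n k f : - rdiag_mx m n k f = rdiag_mx m n k (fun i => - f i).
Proof. by apply/matrixP => i j; rewrite !mxE; case: ifP; rewrite ?oppr0. Qed.

Lemma rdiag_mxB m n k f g :
  rdiag_mx m n k f - rdiag_mx m n k g = rdiag_mx m n k (fun i => f i - g i).
Proof. by apply/matrixP => i j; rewrite !mxE; case: ifP; rewrite ?subr0. Qed.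

Lemma frob2_rdiag_mx m n k f : (k <= m)%N -> (k <= n)%N ->
  frob2 (rdiag_mx m n k f) = complex.Re (\sum_(i < k) (f i)^*%C * f i).
Proof.
by move=> le_km le_kn; rewrite /frob2 cadj_rdiag_mx mul_rdiag_mx // minnn mxtrace_rdiag_mx.
Qed.

End ComplexMatrix.

Section DualMatrix.
Variable R : realType.
Local Notation C := R[i].

Lemma dmulA m n p q (A : dmx R m n) (B : dmx R n p) (D : dmx R p q) :
  dmul (dmul A B) D = dmul A (dmul B D).
Proof.
rewrite /dmul /=; congr pair; first by rewrite mulmxA.
by rewrite mulmxDl mulmxDr !mulmxA addrA.
Qed.

Lemma dmul1l m n (A : dmx R m n) : dmul (did R m) A = A.
Proof. by case: A => As Ad; rewrite /dmul /did /= !mul1mx mul0mx addr0. Qed.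

Lemma dmul1r m n (A : dmx R m n) : dmul A (did R n) = A.
Proof. by case: A => As Ad; rewrite /dmul /did /= !mulmx1 mulmx0 add0r. Qed.

Lemma dmul0l m n p (A : dmx R n p) : dmul ((0, 0) : dmx R m n) A = (0, 0).
Proof. by rewrite /dmul /= !mul0mx addr0. Qed.

Lemma dmul0r m n p (A : dmx R m n) : dmul A ((0, 0) : dmx R n p) = (0, 0).
Proof. by rewrite /dmul /= !mulmx0 addr0. Qed.

Lemma dmulBr m n p (A : dmx R m n) (B D : dmx R n p) :
  dmul A (dsub B D) = dsub (dmul A B) (dmul A D).
Proof.
rewrite /dmul /dsub /=; congr pair; first exact: mulmxBr.
by rewrite !mulmxBr opprD addrACA.
Qed.

Lemma dmulBl m n p (A B : dmx R m n) (D : dmx R n p) :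
  dmul (dsub A B) D = dsub (dmul A D) (dmul B D).
Proof.
rewrite /dmul /dsub /=; congr pair; first exact: mulmxBl.
by rewrite !mulmxBl opprD addrACA.
Qed.

Lemma dsub_eq0 m n (A B : dmx R m n) : dsub A B = (0, 0) -> A = B.
Proof. by case: A B => As Ad [Bs Bd] [/subr0_eq -> /subr0_eq ->]. Qed.

Lemma dadjK m n (A : dmx R m n) : dadj (dadj A) = A.
Proof. by case: A => As Ad; rewrite /dadj /= !cadjK. Qed.

Lemma dadj_unitary n (U : dmx R n n) : dunitary U -> dunitary (dadj U).
Proof. by rewrite /dunitary dadjK => -[]. Qed.

Lemma dunitary_s n (U : dmx R n n) : dunitary U -> cadj U.1 *m U.1 = 1%:M.
Proof. by case=> [[]]. Qed.

Lemma dunitary_d n (U : dmx R n n) : dunitary U ->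
  cadj U.1 *m U.2 + cadj U.2 *m U.1 = 0.
Proof. by case=> [[]]. Qed.

Lemma dunitary_conjK m n (U : dmx R m m) (V : dmx R n n) (Z : dmx R n m) :
  dunitary U -> dunitary V -> dmul (dmul (dadj V) (dmul (dmul V Z) (dadj U))) U = Z.
Proof.
move=> [UtU _] [VtV _].
by rewrite -!dmulA VtV dmul1l !dmulA UtU dmul1r.
Qed.

Lemma dmul_svd_residual m n (U : dmx R m m) (V : dmx R n n) (D A : dmx R m n)
    (X : dmx R n m) :
  A = dmul (dmul U D) (dadj V) ->
  dsub (dmul (dmul A X) A) A =
  dmul (dmul U (dsub (dmul (dmul D (dmul (dmul (dadj V) X) U)) D) D)) (dadj V).
Proof. by move=> ->; rewrite dmulBr dmulBl !dmulA. Qed.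

(* The dual part of [S^* S]. *)
Definition dual_gram m n (S : dmx R m n) : 'M[C]_n := cadj S.1 *m S.2 + cadj S.2 *m S.1.

Lemma dfrobE m n (S : dmx R m n) : dfrob S =
  if S.1 == 0 then (0, cfrob S.2)
  else (cfrob S.1, complex.Re (\tr (dual_gram S)) / (2 * cfrob S.1)).
Proof. by []. Qed.

Lemma dual_gram_unitary_mull m n (U : dmx R m m) (S : dmx R m n) :
  dunitary U -> dual_gram (dmul U S) = dual_gram S.
Proof.
move=> uU; have uUs := dunitary_s uU.
rewrite /dual_gram /= cadjD !cadjM mulmxDr mulmxDl.
have cancelU p (X : 'M[C]_(n, m)) (Y : 'M[C]_(m, p)) : X *m cadj U.1 *m (U.1 *m Y) = X *m Y.
  by rewrite mulmxA -(mulmxA X) uUs mulmx1.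
rewrite !cancelU addrACA [X in _ + X](_ : _ = 0) ?addr0 //.
by rewrite !mulmxA -!(mulmxA (cadj S.1)) -mulmxDr -mulmxDl dunitary_d // mul0mx mulmx0.
Qed.

Lemma mxtrace_dual_gram_unitary_mulr m n (V : dmx R n n) (S : dmx R m n) :
  dunitary V -> \tr (dual_gram (dmul S (dadj V))) = \tr (dual_gram S).
Proof.
move=> uV; rewrite /dual_gram /= cadjD !cadjM !cadjK mulmxDr mulmxDl !mxtraceD !mulmxA.
rewrite !(mxtrace_mulC _ (cadj _)) !mulmxA (dunitary_s uV) !mul1mx.
have cross0 X : \tr (cadj V.2 *m V.1 *m X) + \tr (cadj V.1 *m V.2 *m X) = 0.
  by rewrite -mxtraceD -mulmxDl addrC (dunitary_d uV) mul0mx mxtrace0.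
rewrite -(mulmxA (cadj V.2 *m V.1)) -(mulmxA (cadj V.1 *m V.2)).
by rewrite addrACA cross0 add0r.
Qed.

Lemma dfrob_unitary m n (U : dmx R m m) (V : dmx R n n) (S : dmx R m n) :
  dunitary U -> dunitary V -> dfrob (dmul (dmul U S) (dadj V)) = dfrob S.
Proof.
move=> uU uV; have uUs := dunitary_s uU; have uVs := dunitary_s uV.
have frob2_uv X : frob2 (U.1 *m X *m cadj V.1) = frob2 X.
  by rewrite frob2_unitary_mulr // frob2_unitary_mull.
have uv_eq0 X : (U.1 *m X *m cadj V.1 == 0) = (X == 0).
  apply/eqP/eqP => [X0|->]; last by rewrite mulmx0 mul0mx.
  have <- : cadj U.1 *m (U.1 *m X *m cadj V.1) *m V.1 = X.
    by rewrite !mulmxA uUs mul1mx -mulmxA uVs mulmx1.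
  by rewrite X0 mulmx0 mul0mx.
rewrite !dfrobE mxtrace_dual_gram_unitary_mulr // dual_gram_unitary_mull //=.
rewrite uv_eq0 !cfrobE frob2_uv; case: eqP => // ->.
by rewrite mulmx0 !mul0mx mulmx0 add0r addr0 frob2_uv.
Qed.

Lemma dle_infinitesimal_dfrob (a : R) m n (B : dmx R m n) :
  dle (0, a) (dfrob B) = (B.1 != 0) || (a <= cfrob B.2).
Proof.
by rewrite /dle dfrobE; case: eqP => [_|/eqP B1] /=; rewrite ?ltxx ?eqxx ?cfrob_gt0.
Qed.

Lemma dle_dfrob_infinitesimal (a : R) m n (B : dmx R m n) :
  dle (dfrob B) (0, a) -> B.1 = 0 /\ cfrob B.2 <= a.
Proof.
rewrite /dle dfrobE; case: eqP => [-> /=|/eqP B1 /=]; first by rewrite ltxx eqxx.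
by rewrite ltNge (ltW (cfrob_gt0 B1)) (gt_eqF (cfrob_gt0 B1)).
Qed.

Lemma dle_dfrob_ltr_s m n (A B : dmx R m n) : frob2 A.1 < frob2 B.1 -> dle (dfrob A) (dfrob B).
Proof.
move=> lt_AB; have B1 : B.1 != 0.
  by apply: contraTneq lt_AB => ->; rewrite frob2_0 ltNge frob2_ge0.
rewrite /dle !dfrobE (negPf B1); case: eqP => _ /=; first by rewrite cfrob_gt0.
by rewrite !cfrobE ltr_sqrt ?lt_AB // (le_lt_trans (frob2_ge0 _) lt_AB).
Qed.

End DualMatrix.

Section DiagonalCase.
Variable R : realType.
Local Notation C := R[i].
Variables (m n r t : nat) (mu : nat -> dreal R).
Hypothesis le_rt : (r <= t)%N.
Hypothesis le_tm : (t <= m)%N.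
Hypothesis le_tn : (t <= n)%N.
Hypothesis mu_s_gt0 : forall i, (i < r)%N -> 0 < (mu i).1.
Hypothesis mu_s_eq0 : forall i, (r <= i < t)%N -> (mu i).1 = 0.

Let le_rm : (r <= m)%N := leq_trans le_rt le_tm.
Let le_rn : (r <= n)%N := leq_trans le_rt le_tn.

(* [Ss + Sd eps] is Sigma, [Gs + Gd eps] the middle factor of A^G, [Pm], [Pn] project onto
   the first [r] coordinates, and the m x n matrix [S2d] carries Sigma_2d. *)
Definition Ss := rdiag_mx m n r (fun i => (mu i).1%:C%C).
Definition Sd := rdiag_mx m n t (fun i => (mu i).2%:C%C).
Definition Gs := rdiag_mx n m r (fun i => (dinv (mu i)).1%:C%C).
Definition Gd := rdiag_mx n m r (fun i => (dinv (mu i)).2%:C%C).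
Definition Pm := rdiag_mx (R := R) m m r (fun=> 1).
Definition Pn := rdiag_mx (R := R) n n r (fun=> 1).
Definition Qm := 1%:M - Pm.
Definition Qn := 1%:M - Pn.
Definition S2d := Qm *m Sd *m Qn.
Definition resid (Z : dmx R n m) := dsub (dmul (dmul (Ss, Sd) Z) (Ss, Sd)) (Ss, Sd).

Lemma ddiag_split : ddiag m n t mu = (Ss, Sd).
Proof.
rewrite /ddiag /Ss /Sd; congr pair.
rewrite -/(rdiag_mx m n t (fun i => (mu i).1%:C%C)) (rdiag_mx_shrink _ _ le_rt) //.
by move=> i /mu_s_eq0 ->.
Qed.

Lemma mu_s_invK i : (i < r)%N -> (dinv (mu i)).1%:C%C * (mu i).1%:C%C = 1 :> C.
Proof. by move=> lt_ir; rewrite -rmorphM /= mulVf ?rmorph1 // gt_eqF ?mu_s_gt0. Qed.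

Lemma Gs_Ss : Gs *m Ss = Pn.
Proof. by rewrite mul_rdiag_mx // minnn; apply: eq_rdiag_mx => i /mu_s_invK. Qed.

Lemma Ss_Gs : Ss *m Gs = Pm.
Proof.
by rewrite mul_rdiag_mx // minnn; apply: eq_rdiag_mx => i /mu_s_invK; rewrite mulrC.
Qed.

Lemma Pm_Ss : Pm *m Ss = Ss.
Proof. by rewrite mul_rdiag_mx // minnn; apply: eq_rdiag_mx => i _; rewrite mul1r. Qed.

Lemma Ss_Pn : Ss *m Pn = Ss.
Proof. by rewrite mul_rdiag_mx // minnn; apply: eq_rdiag_mx => i _; rewrite mulr1. Qed.

Lemma Gs_Pm : Gs *m Pm = Gs.
Proof. by rewrite mul_rdiag_mx // minnn; apply: eq_rdiag_mx => i _; rewrite mulr1. Qed.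

Lemma Pn_Gs : Pn *m Gs = Gs.
Proof. by rewrite mul_rdiag_mx // minnn; apply: eq_rdiag_mx => i _; rewrite mul1r. Qed.

Lemma Pm_idem : Pm *m Pm = Pm.
Proof. by rewrite mul_rdiag_mx // minnn; apply: eq_rdiag_mx => i _; rewrite mul1r. Qed.

Lemma Pn_idem : Pn *m Pn = Pn.
Proof. by rewrite mul_rdiag_mx // minnn; apply: eq_rdiag_mx => i _; rewrite mul1r. Qed.

Lemma Pm_adj : cadj Pm = Pm.
Proof. by rewrite cadj_rdiag_mx; apply: eq_rdiag_mx => i _; rewrite conjc1. Qed.

Lemma Pn_adj : cadj Pn = Pn.
Proof. by rewrite cadj_rdiag_mx; apply: eq_rdiag_mx => i _; rewrite conjc1. Qed.

Lemma Qm_Ss : Qm *m Ss = 0.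
Proof. by rewrite mulmxBl mul1mx Pm_Ss subrr. Qed.

Lemma Ss_Qn : Ss *m Qn = 0.
Proof. by rewrite mulmxBr mulmx1 Ss_Pn subrr. Qed.

Lemma GdE : Gd = - (Gs *m Sd *m Gs).
Proof.
rewrite mul_rdiag_mx // mul_rdiag_mx; last by rewrite geq_min le_rn.
rewrite (minn_idPl le_rt) minnn rdiag_mxN; apply: eq_rdiag_mx => i _.
rewrite -!rmorphM -rmorphN /=; congr (_%:C)%C.
by rewrite mulNr mulrAC -expr2 exprVn.
Qed.

Lemma S2dE : S2d = rdiag_mx m n t (fun i => if (i < r)%N then 0 else (mu i).2%:C%C).
Proof.
pose d i : C := (mu i).2%:C%C.
have Pm_Sd : Pm *m Sd = rdiag_mx m n r d.
  by rewrite mul_rdiag_mx // (minn_idPl le_rt); apply: eq_rdiag_mx => i _; rewrite mul1r.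
have Sd_Pn : Sd *m Pn = rdiag_mx m n r d.
  by rewrite mul_rdiag_mx // (minn_idPr le_rt); apply: eq_rdiag_mx => i _; rewrite mulr1.
have D_Pn : rdiag_mx m n r d *m Pn = rdiag_mx m n r d.
  by rewrite mul_rdiag_mx // minnn; apply: eq_rdiag_mx => i _; rewrite mulr1.
rewrite /S2d /Qm /Qn mulmxBl mul1mx Pm_Sd mulmxBr mulmx1 mulmxBl Sd_Pn D_Pn subrr subr0.
have -> : rdiag_mx m n r d = rdiag_mx m n t (fun i => if (i < r)%N then d i else 0).
  rewrite (rdiag_mx_shrink _ _ le_rt) => [|i /andP[]]; last by rewrite leqNgt => /negPf ->.
  by apply: eq_rdiag_mx => i ->.
by rewrite rdiag_mxB; apply: eq_rdiag_mx => i _; case: ifP; rewrite ?subrr ?subr0.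
Qed.

Lemma resid_d Z : (resid Z).2 = Ss *m Z.1 *m Sd + (Ss *m Z.2 + Sd *m Z.1) *m Ss - Sd.
Proof. by []. Qed.

Lemma Qm_resid_Qn Z : Qm *m (resid Z).2 *m Qn = - S2d.
Proof.
rewrite resid_d -(mulmxA Ss).
rewrite (mulmxBr Qm) (mulmxDr Qm) (mulmxBl _ _ Qn) (mulmxDl _ _ Qn).
rewrite (mulmxA Qm Ss) Qm_Ss !mul0mx add0r.
by rewrite -(mulmxA Qm) -(mulmxA _ Ss) Ss_Qn !mulmx0 add0r.
Qed.

Lemma frob2_resid_d Z : frob2 (resid Z).2 =
  frob2 (Pm *m (resid Z).2) + frob2 (Qm *m (resid Z).2 *m Pn) + frob2 S2d.
Proof.
rewrite (frob2_proj_l (resid Z).2 Pm_adj Pm_idem) -/Qm.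
rewrite (frob2_proj_r (Qm *m (resid Z).2) Pn_adj Pn_idem) -/Qn.
by rewrite Qm_resid_Qn frob2N addrA.
Qed.

Lemma residG : resid (Gs, Gd) = (0, - S2d).
Proof.
rewrite /resid /dmul /dsub /=; congr pair; first by rewrite Ss_Gs Pm_Ss subrr.
rewrite GdE mulmxN !mulmxA Ss_Gs mulmxDl mulNmx -!(mulmxA _ Gs Ss) Gs_Ss.
rewrite /S2d /Qm /Qn mulmxBl mul1mx mulmxBr mulmx1 mulmxBl.
by rewrite !opprD !opprK (addrC (- _)) addrAC (addrC (Pm *m Sd)).
Qed.

Lemma frob2_S2d : frob2 S2d =
  frob2 (\matrix_(i < t - r, j < t - r) if i == j then (mu (r + i)).2%:C%C else 0).
Proof.
have -> : \matrix_(i < t - r, j < t - r) (if i == j then (mu (r + i)).2%:C%C else 0) =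
          rdiag_mx (t - r) (t - r) (t - r) (fun i => (mu (r + i)).2%:C%C).
  by apply/matrixP => i j; rewrite !mxE ltn_ord andbT.
rewrite S2dE !frob2_rdiag_mx //; congr complex.Re.
pose d i := if (i < r)%N then 0 else (mu i).2%:C%C.
rewrite -(big_mkord xpredT (fun i => (d i)^*%C * d i)).
rewrite -(big_mkord xpredT (fun i => ((mu (r + i)).2%:C%C)^*%C * (mu (r + i)).2%:C%C)).
rewrite (big_cat_nat (leq0n r) le_rt) /= big_nat_cond big1.
  by rewrite add0r (big_addn 0 t r); apply: eq_bigr => i _; rewrite /d ltnNge leq_addl addnC.
by move=> i /andP[/andP[_ lt_ir] _]; rewrite /d lt_ir mulr0.
Qed.

Lemma S2d_eq0 : r = t -> S2d = 0.
Proof.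
move=> eq_rt; rewrite S2dE -eq_rt; apply/matrixP => i j; rewrite !mxE.
by case: ifP => // /andP[_ ->].
Qed.

Lemma dfrob_residG : dfrob (resid (Gs, Gd)) = (0, cfrob S2d).
Proof. by rewrite residG dfrobE eqxx !cfrobE frob2N. Qed.

Lemma residG_min Z : dle (dfrob (resid (Gs, Gd))) (dfrob (resid Z)).
Proof.
rewrite dfrob_residG dle_infinitesimal_dfrob; case: eqP => //= _.
by rewrite !cfrobE ler_sqrt ?frob2_ge0 // frob2_resid_d lerDr addr_ge0 ?frob2_ge0.
Qed.

Lemma resid_minimizer Z : dle (dfrob (resid Z)) (dfrob (resid (Gs, Gd))) ->
  (resid Z).1 = 0 /\ Pm *m (resid Z).2 = 0.
Proof.
rewrite dfrob_residG => /dle_dfrob_infinitesimal[-> le_S2d]; split=> //.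
move: le_S2d; rewrite !cfrobE ler_sqrt ?frob2_ge0 // frob2_resid_d gerDr => le0.
apply: frob2_eq0; apply/eqP; rewrite eq_le frob2_ge0 andbT (le_trans _ le0) //.
by rewrite lerDl frob2_ge0.
Qed.

Lemma Pn_Zs_Pm Z : (resid Z).1 = 0 -> Pn *m Z.1 *m Pm = Gs.
Proof.
move=> /subr0_eq SZS; have := congr1 (fun M => Gs *m M *m Gs) SZS.
by rewrite /= !mulmxA Gs_Ss -(mulmxA _ Ss Gs) Ss_Gs Pn_Gs.
Qed.

Lemma Pn_Zd_Pm Z : Z.1 = Gs -> Pm *m (resid Z).2 = 0 -> Pn *m Z.2 *m Pm = Gd.
Proof.
move=> Zs PRd; have GRG : Gs *m (resid Z).2 *m Gs = 0.
  by rewrite -Gs_Pm -(mulmxA Gs Pm) PRd mulmx0 mul0mx.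
rewrite resid_d Zs Ss_Gs (mulmxBr Gs) (mulmxDr Gs) (mulmxBl _ _ Gs) (mulmxDl _ _ Gs) in GRG.
have GPSG : Gs *m (Pm *m Sd) *m Gs = Gs *m Sd *m Gs by rewrite mulmxA Gs_Pm.
have GZG : Gs *m ((Ss *m Z.2 + Sd *m Gs) *m Ss) *m Gs = Pn *m Z.2 *m Pm + Gs *m Sd *m Gs.
  rewrite mulmxA -(mulmxA _ Ss Gs) Ss_Gs (mulmxDr Gs) (mulmxDl _ _ Pm) !mulmxA Gs_Ss.
  by rewrite -(mulmxA _ Gs Pm) Gs_Pm.
rewrite GPSG GZG addrA addrK addrC in GRG.
by rewrite GdE; apply/eqP; rewrite -addr_eq0 GRG.
Qed.

Lemma mxtrace_dual_gram_Gs Z : Z.1 = Gs -> Pn *m Z.2 *m Pm = Gd ->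
  \tr (dual_gram Z) = \tr (dual_gram (Gs, Gd)).
Proof.
move=> Zs PZdP; have tr_GsZd : \tr (cadj Gs *m Z.2) = \tr (cadj Gs *m Gd).
  have GsE : Gs = Pn *m Gs *m Pm by rewrite Pn_Gs Gs_Pm.
  rewrite {1}GsE !cadjM Pm_adj Pn_adj -!mulmxA mxtrace_mulC !mulmxA.
  by rewrite -(mulmxA (cadj Gs) Pn Z.2) -(mulmxA (cadj Gs) (Pn *m Z.2) Pm) PZdP.
rewrite /dual_gram Zs /= !mxtraceD (mxtrace_cadj_mulC Gs Z.2) (mxtrace_cadj_mulC Gs Gd).
by rewrite tr_GsZd.
Qed.

Lemma blocks_Pn_Pm X : X = Pn *m X *m Pm + (Pn *m X *m Qm + Qn *m X).
Proof.
by rewrite addrA -mulmxDr /Qm (addrC Pm) subrK mulmx1 -mulmxDl /Qn (addrC Pn) subrK mul1mx.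
Qed.

Lemma frob2_blocks_Pn_Pm X :
  frob2 X = frob2 (Pn *m X *m Pm) + (frob2 (Pn *m X *m Qm) + frob2 (Qn *m X)).
Proof.
by rewrite (frob2_proj_l X Pn_adj Pn_idem) (frob2_proj_r (Pn *m X) Pm_adj Pm_idem) -addrA.
Qed.

(* A minimizer agrees with [Gs] on the [Pn .. Pm] block; any other standard component
   increases the standard part of the norm, and without one the dual parts agree. *)
Lemma residG_min_norm Z : dle (dfrob (resid Z)) (dfrob (resid (Gs, Gd))) ->
  dle (dfrob (Gs, Gd)) (dfrob Z).
Proof.
move=> /resid_minimizer[/Pn_Zs_Pm PZsP PRd].
have [Gs0|Gs_neq0] := eqVneq Gs 0.
  have Gd0 : Gd = 0 by rewrite GdE Gs0 !mul0mx oppr0.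
  by rewrite Gs0 Gd0 dfrobE eqxx cfrob0 dle_infinitesimal_dfrob cfrobE sqrtr_ge0 orbT.
have frob2_Zs := frob2_blocks_Pn_Pm Z.1; rewrite PZsP in frob2_Zs.
have [rest0|rest_neq0] := eqVneq (frob2 (Pn *m Z.1 *m Qm) + frob2 (Qn *m Z.1)) 0.
  move/eqP: rest0; rewrite paddr_eq0 ?frob2_ge0 // => /andP[/eqP/frob2_eq0 PZQ /eqP/frob2_eq0 QZ].
  have Zs : Z.1 = Gs by rewrite [LHS]blocks_Pn_Pm PZsP PZQ QZ !addr0.
  have -> : dfrob Z = dfrob (Gs, Gd).
    by rewrite !dfrobE (mxtrace_dual_gram_Gs Zs (Pn_Zd_Pm Zs PRd)) Zs /= (negPf Gs_neq0).
  by rewrite /dle ltxx eqxx lexx orbT.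
apply: dle_dfrob_ltr_s; rewrite /= frob2_Zs ltrDl lt0r rest_neq0.
by rewrite addr_ge0 ?frob2_ge0.
Qed.

Lemma svd_diagonal_case :
  [/\ forall Z, dle (dfrob (resid (Gs, Gd))) (dfrob (resid Z)),
      forall Z, dle (dfrob (resid Z)) (dfrob (resid (Gs, Gd))) ->
        dle (dfrob (Gs, Gd)) (dfrob Z),
      dfrob (resid (Gs, Gd)) = dfrob (dmx_of 0
        (\matrix_(i < t - r, j < t - r) if i == j then (mu (r + i)).2%:C%C else 0)) &
      r = t -> resid (Gs, Gd) = (0, 0)].
Proof using le_rt le_tm le_tn mu_s_gt0 mu_s_eq0.
split; [exact: residG_min | exact: residG_min_norm | |].
  by rewrite dfrob_residG dfrobE eqxx !cfrobE frob2_S2d.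
by move=> /S2d_eq0 S2d0; rewrite residG S2d0 oppr0.
Qed.

End DiagonalCase.

Theorem theorem4p2 (R : realType) (m n r t : nat)
  (A : dmx R m n) (U : dmx R m m) (V : dmx R n n) (mu : nat -> dreal R) :
  (r <= t)%N -> (t <= minn m n)%N ->
  dunitary U -> dunitary V ->
  (forall i, (i < r)%N -> 0 < (mu i).1) ->
  (forall i, (i.+1 < r)%N -> dle (mu i.+1) (mu i)) ->
  (forall i, (r <= i < t)%N -> (mu i).1 = 0 /\ 0 < (mu i).2) ->
  (forall i, (r <= i)%N -> (i.+1 < t)%N -> dle (mu i.+1) (mu i)) ->
  A = dmul (dmul U (ddiag m n t mu)) (dadj V) ->
  let AG : dmx R n m := dmul (dmul V (ddiag n m r (fun i => dinv (mu i)))) (dadj U) in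
  let Sigma2d : 'M[R[i]]_(t - r) :=
    \matrix_(i < t - r, j < t - r) if i == j then (mu (r + i)%N).2%:C%C else 0 in
  [/\ (forall X : dmx R n m,
         dle (dfrob (dsub (dmul (dmul A AG) A) A)) (dfrob (dsub (dmul (dmul A X) A) A))),
      (forall X : dmx R n m,
         (forall Y : dmx R n m,
            dle (dfrob (dsub (dmul (dmul A X) A) A)) (dfrob (dsub (dmul (dmul A Y) A) A))) ->
         dle (dfrob AG) (dfrob X)),
      dfrob (dsub (dmul (dmul A AG) A) A) = dfrob (dmx_of 0 Sigma2d) &
      (r = t -> dmul (dmul A AG) A = A)].
Proof.
move=> le_rt le_tmn uU uV mu_s_gt0 _ mu_inf _ defA AG Sigma2d.
have /andP[le_tm le_tn] : (t <= m)%N && (t <= n)%N by rewrite -leq_min.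
have {}mu_inf i : (r <= i < t)%N -> (mu i).1 = 0 by move=> /mu_inf[].
have [G_min G_min_norm G_val G_exact] := svd_diagonal_case le_rt le_tm le_tn mu_s_gt0 mu_inf.
rewrite (ddiag_split m n le_rt mu_inf) in defA.
pose Zof (X : dmx R n m) := dmul (dmul (dadj V) X) U.
have residE X : dsub (dmul (dmul A X) A) A = dmul (dmul U (resid r t mu (Zof X))) (dadj V).
  exact: dmul_svd_residual.
have dfrob_residE X :
    dfrob (dsub (dmul (dmul A X) A) A) = dfrob (resid r t mu (Zof X)).
  by rewrite residE dfrob_unitary.
have dfrob_Zof X : dfrob X = dfrob (Zof X).
  by rewrite /Zof -[U]dadjK dfrob_unitary //; apply: dadj_unitary.
have ZofAG : Zof AG = (Gs m n r mu, Gd m n r mu) by rewrite /Zof dunitary_conjK.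
split.
- by move=> X; rewrite (dfrob_residE AG) (dfrob_residE X) ZofAG; apply: G_min.
- move=> X X_min; rewrite (dfrob_Zof AG) (dfrob_Zof X) ZofAG; apply: G_min_norm.
  by have := X_min AG; rewrite (dfrob_residE AG) (dfrob_residE X) ZofAG.
- by rewrite dfrob_residE ZofAG G_val.
- move=> /G_exact resG0; apply: dsub_eq0.
  by rewrite residE ZofAG resG0 dmul0r dmul0l.
Qed.
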